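(* If $v\in\widehat T_n\setminus\{e\}$, then there exist $w',w''\in E_n$ with $w'\succeq\mathrm{par}(v)$, $w''\succeq v$ and $$c\big[\|\mathrm{conf}(w')\|_{L,r}+\|\mathrm{conf}(w'')\|_{L,r}\big]<\|d(\hat p_n(\cdot|w'),\hat p_n(\cdot|w''))\|_{L,k}.$$
   Context: $A$ is a finite alphabet; strings $w=w_{-j}\cdots w_{-1}$ over $A$; $e$ is the empty string; $w\preceq w'$ ($w'\succeq w$) means $w$ is a suffix of $w'$; $\mathrm{par}(w_{-j}\cdots w_{-1})=w_{-j+1}\cdots w_{-1}$. A tree is a set of strings containing $e$ and closed under $\mathrm{par}$; a leaf is an element that is the parent of no element. Data: for $\ell=1,\dots,L$ a sample $X_1^n(\ell)\in A^n$; $N_{j,\ell}(w)$ is the number of occurrences of $w$ as a block of consecutive symbols in $X_1^j(\ell)$; $\hat p_{n,\ell}(a|w)=N_{n,\ell}(wa)/N_{n-1,\ell}(w)$ when $\min_\ell N_{n-1,\ell}(w)>0$. Metrics $d_\ell$ on distributions over $A$, $d(q,q')=(d_\ell(q_\ell,q'_\ell))_\ell$, $\hat p_n(\cdot|w)=(\hat p_{n,\ell}(\cdot|w))_\ell$; confidence radii $\mathrm{conf}(w)\in[0,1]^L$; $\|v\|_{L,q}=(\frac1L\sum_\ell|v_\ell|^q)^{1/q}$; fixed $k,r\ge1$ and $c>1$. $E_n=\{w:\min_\ell N_{n-1,\ell}(w)>0\}$. For nonempty $w\in E_n$, $\mathsf{CanRmv}(w)=1$ iff for all $w',w''\in E_n$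 with $w\preceq w'$ and $\mathrm{par}(w)\preceq w''$: $\|d(\hat p_n(\cdot|w'),\hat p_n(\cdot|w''))\|_{L,k}\le c\|\mathrm{conf}(w')\|_{L,r}+c\|\mathrm{conf}(w'')\|_{L,r}$; otherwise $0$. PruneTree: start with $\widehat T_n=E_n$ and all nodes unexamined; while $\widehat T_n$ has an unexamined leaf $w$ ($w\neq e$), remove $w$ from $\widehat T_n$ if $\mathsf{CanRmv}(w)=1$, and mark $w$ examined; output $\widehat T_n$. *)

From mathcomp Require Import all_boot all_order all_algebra.
From mathcomp Require Import reals exp.
Set Implicit Arguments. Unset Strict Implicit. Unset Printing Implicit Defensive.
Import Order.TTheory GRing.Theory Num.Theory.
Local Open Scope ring_scope.

Section Defs.
Variables (R : realType) (A : finType).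

(* Strings w = w_{-j} ... w_{-1} are represented as [:: w_{-j}; ...; w_{-1}]. *)
Definition par (w : seq A) : seq A := behead w.
(* w ⪯ w' : w is a suffix of w' *)
Definition suf (w w' : seq A) : bool := suffix w w'.

Definition is_leaf (T : seq A -> Prop) (w : seq A) : Prop :=
  T w /\ forall u, T u -> u <> [::] -> par u <> w.

(* N_{j}(w) for a sample x : number of occurrences of w as a block of
   consecutive symbols in the first j symbols of x (the empty block occurs
   at the j+1 possible positions). *)
Definition Nocc (x : seq A) (j : nat) (w : seq A) : nat :=
  count (fun i => take (size w) (drop i (take j x)) == w)
        (iota 0 (j.+1 - size w)).

Definition phat (x : seq A) (n : nat) (w : seq A) (a : A) : R :=
  (Nocc x n (rcons w a))%:R / (Nocc x n.-1 w)%:R.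

Definition En L (X : 'I_L -> seq A) (n : nat) (w : seq A) : Prop :=
  forall l : 'I_L, (0 < Nocc (X l) n.-1 w)%N.

Definition normLq L (q : R) (v : 'I_L -> R) : R :=
  powR (L%:R^-1 * \sum_(l < L) powR `|v l| q) q^-1.

Definition is_distr (q : A -> R) : Prop :=
  (forall a, 0 <= q a) /\ \sum_a q a = 1.

Definition is_metric_on_distr (dd : (A -> R) -> (A -> R) -> R) : Prop :=
  forall p q s, is_distr p -> is_distr q -> is_distr s ->
    [/\ 0 <= dd p q, dd p q = 0 <-> p = q, dd p q = dd q p
      & dd p s <= dd p q + dd q s].

Definition CanRmv L (X : 'I_L -> seq A) (n : nat)
  (d : 'I_L -> (A -> R) -> (A -> R) -> R) (conf : seq A -> 'I_L -> R)
  (k r c : R) (w : seq A) : Prop :=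
  forall w' w'', En X n w' -> En X n w'' -> suf w w' -> suf (par w) w'' ->
    normLq k (fun l => d l (phat (X l) n w') (phat (X l) n w''))
      <= c * normLq r (conf w') + c * normLq r (conf w'').

Definition unexamined_leaf (T Ex : seq A -> Prop) (w : seq A) : Prop :=
  w <> [::] /\ is_leaf T w /\ ~ Ex w.

(* reachable states (current tree, examined nodes) of PruneTree, for any
   order in which unexamined leaves are picked *)
Inductive prune_run (E : seq A -> Prop) (canrmv : seq A -> Prop) :
  (seq A -> Prop) -> (seq A -> Prop) -> Prop :=
| run_init : prune_run E canrmv E (fun _ => False)
| run_remove T Ex w : prune_run E canrmv T Ex -> unexamined_leaf T Ex w ->
    canrmv w ->
    prune_run E canrmv (fun u => T u /\ u <> w) (fun u => Ex u \/ u = w)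
| run_keep T Ex w : prune_run E canrmv T Ex -> unexamined_leaf T Ex w ->
    ~ canrmv w -> prune_run E canrmv T (fun u => Ex u \/ u = w).

Definition PruneTree_output L (X : 'I_L -> seq A) (n : nat)
  (d : 'I_L -> (A -> R) -> (A -> R) -> R) (conf : seq A -> 'I_L -> R)
  (k r c : R) (T : seq A -> Prop) : Prop :=
  exists Ex, prune_run (En X n) (CanRmv X n d conf k r c) T Ex /\
    forall w, ~ unexamined_leaf T Ex w.

End Defs.
Arguments phat {R A} x n w a.
Arguments is_distr {R A} q.
Arguments En {A L} X n w.

From mathcomp Require Import all_boot all_order all_algebra.
From mathcomp Require Import reals exp.
From mathcomp Require Import zify.
Import Order.TTheory GRing.Theory Num.Theory.
From Stdlib Require Import Classical FunctionalExtensionality.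

Local Open Scope ring_scope.

(* Every node of the output lies below a leaf of the output (nodes of E_n
   have bounded length), and a leaf other than the root was examined and
   kept, i.e. CanRmv failed there: some pair w' above the leaf, w'' above its
   parent violates the pruning inequality.  Both suffix relations are
   inherited by v and par v, and the symmetry of the metrics d_l lets us swap
   w' and w''; the empirical conditionals are genuine distributions because
   the counts of the one-symbol extensions of w add up to the count of w. *)

Lemma suffix_behead {T : eqType} {v u : seq T} :
  suffix v u -> suffix (behead v) (behead u).
Proof.
case/suffixP => -[|a p] -> //=; first exact: suffix_refl.
apply: (@suffix_trans _ v); last exact: suffix_suffix.
by case: v => [|b v]; [exact: suffix_refl | exact: suffix_cons].
Qed.

Section Counts.
Context {A : finType}.

Lemma Nocc_gt0_size (x w : seq A) j : (0 < Nocc x j w)%N -> (size w <= j)%N.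
Proof.
rewrite /Nocc => h.
have := leq_trans h (count_size _ _); rewrite size_iota; lia.
Qed.

Lemma sum_Nocc_rcons (x w : seq A) : (0 < size x)%N ->
  (\sum_(a : A) Nocc x (size x) (rcons w a) = Nocc x (size x).-1 w)%N.
Proof.
move=> hx; rewrite /Nocc prednK //.
under eq_bigr => a _ do rewrite take_size size_rcons subSS.
rewrite -sum1_count.
under eq_bigr => a _ do rewrite -sum1_count big_mkcond /=.
rewrite exchange_big [RHS]big_mkcond /=.
apply: eq_big_seq => i; rewrite mem_iota add0n => hi.
have hs : (size w < size (drop i x))%N by rewrite size_drop; lia.
have -> : take (size w) (drop i (take (size x).-1 x)) = take (size w) (drop i x).
  have -> : (size x).-1 = ((size x).-1 - i + i)%N by lia.
  by rewrite -take_drop take_takel //; lia.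
case: (drop i x) hs => [//|a0 s] hs.
under eq_bigr => a _ do rewrite (take_nth a0 hs) eqseq_rcons.
case: eqP => _ /=; last by rewrite big1.
rewrite (bigD1 (nth a0 (a0 :: s) (size w))) //= eqxx big1 // => b hb.
by rewrite eq_sym (negbTE hb).
Qed.

Lemma phat_distr (R : realType) (x w : seq A) :
  (0 < size x)%N -> (0 < Nocc x (size x).-1 w)%N ->
  is_distr (phat (R:=R) x (size x) w).
Proof.
move=> hx hN; split=> [a|]; first by rewrite /phat divr_ge0 // ler0n.
rewrite /phat -mulr_suml -natr_sum sum_Nocc_rcons // divff //.
by rewrite pnatr_eq0 -lt0n.
Qed.

End Counts.

Lemma metric_on_distr_sym (R : realType) (A : finType)
    (dd : (A -> R) -> (A -> R) -> R) (p q : A -> R) :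
  is_metric_on_distr dd -> is_distr p -> is_distr q -> dd p q = dd q p.
Proof. by move=> hd hp hq; have [_ _ -> _] := hd p q q hp hq hq. Qed.

Section Pruning.
Context {A : finType}.
Implicit Types (T Ex E C : seq A -> Prop) (u v : seq A).

Lemma exists_leaf_above {T N v} :
  (forall u, T u -> (size u <= N)%N) -> T v ->
  exists2 u, suffix v u & is_leaf T u.
Proof.
move=> hN; suff leaf_above m w : (N - size w < m)%N -> T w ->
    exists2 u, suffix w u & is_leaf T u.
  exact: (leaf_above (N - size v).+1).
elim: m w {v} => [//|m IH] v hm Tv.
case: (classic (exists u, [/\ T u, u <> [::] & par u = v])) => [|no_child].
  case=> -[|a u] [Tu nu uv]; first by [].
  rewrite /par /= in uv; subst u.
  have := hN _ Tu; rewrite /= => hsize.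
  have [w vw leaf_w] := IH (a :: v) ltac:(rewrite /=; lia) Tu.
  by exists w => //; apply: suffix_trans vw; exact: suffix_cons.
exists v; first exact: suffix_refl.
by split=> // u Tu un uv; apply: no_child; exists u.
Qed.

Lemma prune_run_inv {E C T Ex} : prune_run E C T Ex ->
  forall u, T u -> E u /\ (Ex u -> ~ C u).
Proof.
elim=> [u Eu|T0 Ex0 w _ IH _ _ u [Tu uw]|T0 Ex0 w _ IH _ nCw u Tu].
- by split.
- by have [Eu H] := IH u Tu; split=> // -[/H|].
- by have [Eu H] := IH u Tu; split=> // -[/H|->].
Qed.

Lemma prune_final_leaf {E C T Ex u} :
  prune_run E C T Ex -> (forall w, ~ unexamined_leaf T Ex w) ->
  is_leaf T u -> u <> [::] -> ~ C u.
Proof.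
move=> run final leaf_u un.
have [_ kept] := prune_run_inv run u (proj1 leaf_u).
by apply: kept; apply: NNPP => nEx; apply: (final u).
Qed.

End Pruning.

Lemma not_CanRmv {R : realType} {A : finType} {L} {X : 'I_L -> seq A} {n}
    {d : 'I_L -> (A -> R) -> (A -> R) -> R} {conf : seq A -> 'I_L -> R}
    {k r c : R} {w : seq A} :
  ~ CanRmv X n d conf k r c w ->
  exists w' w'', [/\ En X n w', En X n w'', suf w w', suf (par w) w''
    & c * normLq r (conf w') + c * normLq r (conf w'')
      < normLq k (fun l => d l (phat (X l) n w') (phat (X l) n w''))].
Proof.
move=> nC; apply: NNPP => none; apply: nC => w' w'' E' E'' sw' sw''.
rewrite leNgt ?num_real //; apply/negP => lt.
by apply: none; exists w', w''.
Qed.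

Theorem propositionA2 (R : realType) (A : finType) (L n : nat)
  (X : 'I_L -> seq A) (d : 'I_L -> (A -> R) -> (A -> R) -> R)
  (conf : seq A -> 'I_L -> R) (k r c : R) (T : seq A -> Prop) :
  (0 < L)%N ->
  (forall l, size (X l) = n) ->
  (forall l, is_metric_on_distr (d l)) ->
  (forall w l, 0 <= conf w l <= 1) ->
  1 <= k -> 1 <= r -> 1 < c ->
  PruneTree_output X n d conf k r c T ->
  forall v : seq A, T v -> v <> [::] ->
  exists w' w'', En X n w' /\ En X n w'' /\ suf (par v) w' /\ suf v w'' /\
    c * (normLq r (conf w') + normLq r (conf w''))
      < normLq k (fun l => d l (phat (X l) n w') (phat (X l) n w'')).
Proof.
move=> hL hX hd _ _ _ _ [Ex [run final]] v Tv vn.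
have En_size w : En X n w -> (size w <= n.-1)%N.
  by move=> /(_ (Ordinal hL)); apply: Nocc_gt0_size.
have T_size w : T w -> (size w <= n.-1)%N.
  by move=> /(prune_run_inv run) [/En_size].
have [u vu leaf_u] := exists_leaf_above T_size Tv.
have un : u <> [::].
  by move=> u0; case/suffixP: vu => -[|? ?]; rewrite u0 // => v0; apply: vn.
have [w' [w'' [E' E'' uw' puw'' lt]]] :=
  not_CanRmv (prune_final_leaf run final leaf_u un).
have n_gt0 : (0 < n)%N.
  by have := T_size u (proj1 leaf_u); case: u un {vu leaf_u uw' puw''} => //= *; lia.
have phat_distr_En w l : En X n w -> is_distr (phat (R:=R) (X l) n w).
  by move=> Ew; rewrite -(hX l); apply: phat_distr; rewrite hX //; apply: Ew.
exists w'', w'; split; [by [] | split; [by [] | split; [|split]]].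
- exact: suffix_trans (suffix_behead vu) puw''.
- exact: suffix_trans vu uw'.
have -> : (fun l => d l (phat (X l) n w'') (phat (X l) n w')) =
          (fun l => d l (phat (X l) n w') (phat (X l) n w'')).
  by apply: functional_extensionality => l; apply: metric_on_distr_sym; auto.
by rewrite mulrDr addrC.
Qed.
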